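(* Fix a nondegenerate triangle $E=E_1E_2E_3$ in the real affine plane. Parallel triangles (triangles $D=D_1D_2D_3$ with $D_iD_j\parallel E_iE_j$) are identified, via their barycentric coordinates $(\delta_1,\delta_2,\delta_3)$, with the points of $\mathbb{R}^3$ with $\delta_1+\delta_2+\delta_3\neq 0$; the space of triangles is $\mathbb{R}^3$, i.e. this set extended by formal elements with $\delta_1+\delta_2+\delta_3=0$. Then the operation $+$ on parallel triangles extends to a commutative and associative operation on the space of triangles, and the resulting group is isomorphic to the additive group $\mathbb{R}^3$.
   Context: Here $d=\delta_1+\delta_2+\delta_3$ is the unique nonzero real such that the homothety of ratio $d$ (translation if $d=1$) maps $D_i$ to $E_i$, and $\delta_i/d$ are the barycentric coordinates (with respect to $E$) of the centroid of $D$. For parallel triangles $A,B$, the pre-sum $C=A\boxplus B$ has vertices $C_k=A_iB_j\cap A_jB_i$ for each permutation $(i,j,k)$ of $(1,2,3)$, and $A+B$ is the point reflection of $C$ in its centroid (defined when $C$ is a nondegenerate triangle in the affine plane). *)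

From HB Require Import structures.
From mathcomp Require Import all_boot all_order all_algebra.
From mathcomp Require Import reals.
Set Implicit Arguments. Unset Strict Implicit. Unset Printing Implicit Defensive.
Import Order.TTheory GRing.Theory Num.Theory.
Local Open Scope ring_scope.

Definition point (R : realType) := 'rV[R]_2.
Definition triangle (R : realType) := 'I_3 -> point R.

Definition cross (R : realType) (u v : point R) : R :=
  u ord0 ord0 * v ord0 ord_max - u ord0 ord_max * v ord0 ord0.

Definition collinear (R : realType) (P Q S : point R) : bool :=
  cross (Q - P) (S - P) == 0.

Definition i0 : 'I_3 := @Ordinal 3 0 isT.
Definition i1 : 'I_3 := @Ordinal 3 1 isT.
Definition i2 : 'I_3 := @Ordinal 3 2 isT.

Definition nondegenerate_tri (R : realType) (T : triangle R) : bool :=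
  ~~ collinear (T i0) (T i1) (T i2).

Definition centroid (R : realType) (T : triangle R) : point R :=
  3%:R^-1 *: (T i0 + T i1 + T i2).

Definition dsum (R : realType) (delta : 'rV[R]_3) : R := \sum_i delta ord0 i.

(* The parallel triangle D with coordinates delta (requires dsum delta != 0):
   its centroid has barycentric coordinates delta_i / d w.r.t. E, and the
   homothety of ratio d (translation if d = 1) maps D_i to E_i, i.e.
   E_i - G_E = d (D_i - G_D). *)
Definition par_tri (R : realType) (E : triangle R) (delta : 'rV[R]_3) : triangle R :=
  let d := dsum delta in
  let G := \sum_i (delta ord0 i / d) *: E i in
  fun i => G + d^-1 *: (E i - centroid E).

Definition is_presum (R : realType) (A B C : triangle R) : Prop :=
  forall i j k : 'I_3, i != j -> j != k -> i != k ->
    [/\ A i != B j, A j != B i,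
        cross (B j - A i) (B i - A j) != 0,
        collinear (A i) (B j) (C k) & collinear (A j) (B i) (C k)].

Definition reflect_centroid (R : realType) (C : triangle R) : triangle R :=
  fun k => 2%:R *: centroid C - C k.

(* Write a parallel triangle with coordinates a and d_a = dsum a as
   d_a D_i = sum_l a_l E_l + (E_i - G_E).  For {i, j, k} = {1, 2, 3} this gives
   d_a A_i + d_b B_j = sum_l (a + b)_l E_l + (G_E - E_k), which is symmetric
   in i and j.  If d_a + d_b != 0, the barycentre of A_i, B_j with weights
   d_a, d_b therefore lies on both lines A_iB_j and A_jB_i, so it is C_k, and
   reflecting C in its centroid yields the parallel triangle with coordinates
   a + b.  If d_a + d_b = 0, the symmetry forces B_j - A_i = B_i - A_j, so the
   two lines are parallel and no presum exists.  Hence + is coordinatewise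
   addition, which is defined on all of R^3. *)
From HB Require Import structures.
From mathcomp Require Import all_boot all_order all_algebra.
From mathcomp Require Import reals.
From mathcomp Require Import ring.
From Stdlib Require Import FunctionalExtensionality.
Set Implicit Arguments. Unset Strict Implicit. Unset Printing Implicit Defensive.
Import Order.TTheory GRing.Theory Num.Theory.
Local Open Scope ring_scope.

Lemma sum_ord3_distinct (V : nmodType) (F : 'I_3 -> V) (i j k : 'I_3) :
  i != j -> j != k -> i != k -> \sum_l F l = F i + F j + F k.
Proof.
move=> nij njk nik.
have uniq_ijk : uniq [:: i; j; k] by rewrite /= !inE negb_or nij nik njk.
have [_ eq_ijk] := uniq_min_size uniq_ijk (fun l _ => mem_enum predT l)
  (eq_leq (size_enum_ord 3)).
rewrite -big_enum /= (perm_big _ (uniq_perm (enum_uniq _) uniq_ijk _)) //.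
by rewrite !big_cons big_nil /= addr0 addrA.
Qed.

Lemma dsumD (R : realType) (a b : 'rV[R]_3) : dsum (a + b) = dsum a + dsum b.
Proof. by rewrite /dsum -big_split; apply: eq_bigr => l _; rewrite mxE. Qed.

Section PlaneGeometry.
Variable R : realType.

Lemma crossB (u v w : point R) : cross u (v - w) = cross u v - cross u w.
Proof. by rewrite /cross !mxE; ring. Qed.

Lemma cross_scale_self (u : point R) (c : R) : cross u (c *: u) = 0.
Proof. by rewrite /cross !mxE; ring. Qed.

Lemma crossvv (u : point R) : cross u u = 0.
Proof. by rewrite -[X in cross _ X]scale1r cross_scale_self. Qed.

Lemma cross_expansion (u v x : point R) :
  cross u v *: x = cross u x *: v - cross v x *: u.
Proof.
apply/rowP => m; rewrite !mxE /cross.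
have [-> | ->] : m = ord0 \/ m = ord_max.
  by case: m => -[|[|//]] ?; [left | right]; apply: val_inj.
all: by ring.
Qed.

Lemma cross_indep_eq0 (u v x : point R) :
  cross u v != 0 -> cross u x = 0 -> cross v x = 0 -> x = 0.
Proof.
move=> uv_neq0 ux0 vx0; apply/eqP; have := cross_expansion u v x.
by rewrite ux0 vx0 !scale0r subr0 => /eqP; rewrite scaler_eq0 (negbTE uv_neq0).
Qed.

Lemma collinear_meet_unique (P1 Q1 P2 Q2 X Y : point R) :
  cross (Q1 - P1) (Q2 - P2) != 0 ->
  collinear P1 Q1 X -> collinear P2 Q2 X ->
  collinear P1 Q1 Y -> collinear P2 Q2 Y -> X = Y.
Proof.
move=> nonparallel /eqP X1 /eqP X2 /eqP Y1 /eqP Y2; apply/eqP; rewrite -subr_eq0.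
have diff_sub (P : point R) : X - Y = (X - P) - (Y - P) by rewrite opprB addrA subrK.
apply/eqP/(cross_indep_eq0 nonparallel).
  by rewrite (diff_sub P1) crossB X1 Y1 subrr.
by rewrite (diff_sub P2) crossB X2 Y2 subrr.
Qed.

Lemma collinear_barycentre (P Q : point R) (s t : R) :
  s + t != 0 -> collinear P Q ((s + t)^-1 *: (s *: P + t *: Q)).
Proof.
move=> st_neq0; have Y_sub : (s + t)^-1 *: (s *: P + t *: Q) - P
    = (t / (s + t)) *: (Q - P).
  by apply/rowP => m; rewrite !mxE; field.
by rewrite /collinear Y_sub cross_scale_self.
Qed.

End PlaneGeometry.

Section ParallelTriangles.
Variables (R : realType) (E : triangle R).

Definition vertex_comb (a : 'rV[R]_3) : point R := \sum_l a ord0 l *: E l.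

Lemma vertex_combD (a b : 'rV[R]_3) :
  vertex_comb (a + b) = vertex_comb a + vertex_comb b.
Proof. by rewrite /vertex_comb -big_split; apply: eq_bigr => l _; rewrite mxE scalerDl. Qed.

Lemma par_triE (a : 'rV[R]_3) (i : 'I_3) :
  par_tri E a i = (dsum a)^-1 *: (vertex_comb a + (E i - centroid E)).
Proof.
rewrite /par_tri /vertex_comb /= [RHS]scalerDr scaler_sumr; congr (_ + _).
by apply: eq_bigr => l _; rewrite scalerA mulrC.
Qed.

Lemma centroid_distinct (i j k : 'I_3) : i != j -> j != k -> i != k ->
  3%:R *: centroid E = E i + E j + E k.
Proof.
move=> nij njk nik; rewrite /centroid scalerA mulfV ?pnatr_eq0 // scale1r.
rewrite -(sum_ord3_distinct E (i := i0) (j := i1) (k := i2)) //.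
exact: sum_ord3_distinct.
Qed.

Lemma scaled_par_triD (a b : 'rV[R]_3) (i j k : 'I_3) :
  i != j -> j != k -> i != k -> dsum a != 0 -> dsum b != 0 ->
  dsum a *: par_tri E a i + dsum b *: par_tri E b j
    = vertex_comb (a + b) + (centroid E - E k).
Proof.
move=> nij njk nik a_neq0 b_neq0.
rewrite !par_triE !scalerA !mulfV // !scale1r vertex_combD.
have -> : E k = 3%:R *: centroid E - E i - E j.
  by rewrite (centroid_distinct nij njk nik); apply/rowP => m; rewrite !mxE; ring.
by apply/rowP => m; rewrite !mxE; ring.
Qed.

Definition presum_point (a b : 'rV[R]_3) : triangle R :=
  fun k => (dsum a + dsum b)^-1 *: (vertex_comb (a + b) + (centroid E - E k)).

Lemma presum_dsum_neq0 (a b : 'rV[R]_3) (C : triangle R) :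
  dsum a != 0 -> dsum b != 0 -> is_presum (par_tri E a) (par_tri E b) C ->
  dsum a + dsum b != 0.
Proof.
move=> a_neq0 b_neq0 presumC; apply/negP => /eqP ab0.
have [_ _ + _ _] := presumC i0 i1 i2 isT isT isT.
suff -> : par_tri E b i1 - par_tri E a i0 = par_tri E b i0 - par_tri E a i1.
  by rewrite crossvv eqxx.
have b_opp : dsum b = - dsum a by apply/eqP; rewrite -addr_eq0 addrC ab0.
have := scaled_par_triD (i := i0) (j := i1) (k := i2) isT isT isT a_neq0 b_neq0.
rewrite -(scaled_par_triD (i := i1) (j := i0) (k := i2) isT isT isT a_neq0 b_neq0).
rewrite b_opp !scaleNr -!scalerBr => /(scalerI a_neq0) eq_diff.
by rewrite -opprB eq_diff opprB.
Qed.

Lemma presum_vertexE (a b : 'rV[R]_3) (C : triangle R) (i j k : 'I_3) :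
  i != j -> j != k -> i != k -> dsum a != 0 -> dsum b != 0 ->
  dsum a + dsum b != 0 -> is_presum (par_tri E a) (par_tri E b) C ->
  C k = presum_point a b k.
Proof.
move=> nij njk nik a_neq0 b_neq0 ab_neq0 presumC.
have [_ _ nonparallel Cij Cji] := presumC i j k nij njk nik.
rewrite /presum_point -(scaled_par_triD nij njk nik a_neq0 b_neq0).
apply: (collinear_meet_unique nonparallel Cij Cji); first exact: collinear_barycentre.
rewrite (scaled_par_triD nij njk nik a_neq0 b_neq0).
have nji : j != i by rewrite eq_sym.
rewrite -(scaled_par_triD nji nik njk a_neq0 b_neq0).
exact: collinear_barycentre.
Qed.

Lemma reflect_centroid_presum_point (a b : 'rV[R]_3) :
  reflect_centroid (presum_point a b) = par_tri E (a + b).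
Proof.
apply: functional_extensionality => k.
rewrite /reflect_centroid /presum_point par_triE dsumD.
apply/rowP => m; rewrite /centroid !mxE; move: (dsum a + dsum b)^-1 => c.
by field.
Qed.

End ParallelTriangles.

Theorem corollary1 (R : realType) (E : triangle R) :
  nondegenerate_tri E ->
  exists op : 'rV[R]_3 -> 'rV[R]_3 -> 'rV[R]_3,
    [/\ (forall (a b : 'rV[R]_3) (C : triangle R),
           dsum a != 0 -> dsum b != 0 ->
           is_presum (par_tri E a) (par_tri E b) C -> nondegenerate_tri C ->
           dsum (op a b) != 0 /\ par_tri E (op a b) = reflect_centroid C),
        commutative op,
        associative op &
        exists f : 'rV[R]_3 -> 'rV[R]_3,
          bijective f /\ forall x y, f (op x y) = f x + f y].
Proof.
move=> _; exists +%R.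
split; [| exact: addrC | exact: addrA | by exists id; split; [exists id |]].
move=> a b C a_neq0 b_neq0 presumC _.
have ab_neq0 := presum_dsum_neq0 a_neq0 b_neq0 presumC.
have C_presum : C = presum_point E a b.
  apply: functional_extensionality => k.
  have [i [j [nij njk nik]]] : exists i j : 'I_3, [/\ i != j, j != k & i != k].
    by case: k => -[|[|[|//]]] ? /=; [exists i1, i2 | exists i0, i2 | exists i0, i1].
  exact: presum_vertexE nij njk nik a_neq0 b_neq0 ab_neq0 presumC.
by rewrite dsumD C_presum reflect_centroid_presum_point.
Qed.
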